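(* Let $T:\mathcal{M}_d\to\mathcal{M}_d$ be a doubly stochastic quantum channel. The following are equivalent: (1) $T$ is primitive; (2) there exists $n\in\mathbb{N}$ such that $(T^* )^nT^n$ is primitive.
   Context: A quantum channel is a completely positive trace-preserving map; doubly stochastic means $T(\mathbb{1})=T^*(\mathbb{1})=\mathbb{1}$, with $T^*$ the Hilbert–Schmidt adjoint. A doubly stochastic channel $S$ is primitive if $\lim_{k\to\infty}S^k(\rho)=\mathbb{1}_d/d$ for every density matrix $\rho$. *)

From HB Require Import structures.
From mathcomp Require Import all_boot all_order all_algebra.
From mathcomp Require Import reals.
From mathcomp.real_closed Require Import complex.
Set Implicit Arguments. Unset Strict Implicit. Unset Printing Implicit Defensive.
Import Order.TTheory GRing.Theory Num.Theory.
Local Open Scope ring_scope.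

Section QChannels.
Variable R : realType.
Local Notation C := R[i].

Definition adjmx (m n : nat) (A : 'M[C]_(m, n)) : 'M[C]_(n, m) :=
  (map_mx Num.conj A)^T.

Definition psd (n : nat) (A : 'M[C]_n) : Prop :=
  forall v : 'cV[C]_n, 0 <= (adjmx v *m A *m v) 0 0.

(* positivity of a block operator X = (X i j) in M_k (M_d) = M_k (x) M_d *)
Definition psd_block (k d : nat) (X : 'I_k -> 'I_k -> 'M[C]_d) : Prop :=
  forall v : 'I_k -> 'cV[C]_d,
    0 <= \sum_(i < k) \sum_(j < k) (adjmx (v i) *m X i j *m v j) 0 0.

(* complete positivity: id_k (x) T is positive for every k *)
Definition completely_positive (d : nat) (T : 'M[C]_d -> 'M[C]_d) : Prop :=
  forall (k : nat) (X : 'I_k -> 'I_k -> 'M[C]_d),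
    psd_block X -> psd_block (fun i j => T (X i j)).

Definition trace_preserving (d : nat) (T : 'M[C]_d -> 'M[C]_d) : Prop :=
  forall X : 'M[C]_d, \tr (T X) = \tr X.

Definition quantum_channel (d : nat) (T : {linear 'M[C]_d -> 'M[C]_d}) : Prop :=
  completely_positive T /\ trace_preserving T.

(* Hilbert-Schmidt adjoint: tr (A^dagger T(B)) = tr ((T^* A)^dagger B);
   (T^* A)_{ij} = tr (T(E_ij)^dagger A). *)
Definition hs_adjoint (d : nat) (T : 'M[C]_d -> 'M[C]_d) : 'M[C]_d -> 'M[C]_d :=
  fun A => \matrix_(i, j) \tr (adjmx (T (delta_mx i j)) *m A).

Definition doubly_stochastic (d : nat) (T : {linear 'M[C]_d -> 'M[C]_d}) : Prop :=
  quantum_channel T /\ T 1%:M = 1%:M /\ hs_adjoint T 1%:M = 1%:M.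

Definition density (d : nat) (rho : 'M[C]_d) : Prop := psd rho /\ \tr rho = 1.

(* entrywise convergence of a sequence of matrices (equivalent to norm convergence) *)
Definition mx_cvg (d : nat) (u : nat -> 'M[C]_d) (L : 'M[C]_d) : Prop :=
  forall e : C, 0 < e -> exists N : nat, forall k : nat, (N <= k)%N ->
    forall i j, `|u k i j - L i j| < e.

Definition primitive (d : nat) (S : 'M[C]_d -> 'M[C]_d) : Prop :=
  forall rho : 'M[C]_d, density rho ->
    mx_cvg (fun k => iter k S rho) ((d%:R)^-1 *: 1%:M).

End QChannels.

From HB Require Import structures.
From mathcomp Require Import all_boot all_order all_algebra.
From mathcomp Require Import reals.
From mathcomp.real_closed Require Import complex.
From mathcomp Require Import ring.
Set Implicit Arguments. Unset Strict Implicit. Unset Printing Implicit Defensive.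
Import Order.TTheory GRing.Theory Num.Theory.
Local Open Scope ring_scope.

(* Let <A, B> = tr (B^† A) be the Hilbert-Schmidt inner product, |A| its norm, and
   S_n = (T* )^n T^n, which is self-adjoint for it. Complete positivity applied to the
   positive block matrix [[1, X], [X^†, X^† X]] gives the Kadison-Schwarz inequality
   T(X)^† T(X) <= T(X^† X), so the unital trace-preserving T, and with it T*, does not
   increase |.|. Every traceless matrix is a combination of the d^2 matrices
   E_ab - [a = b]/d, each a combination of differences of density matrices; hence a
   primitive sequence of linear maps eventually halves the norm of all traceless
   matrices uniformly. If T is primitive, |S_K Z| <= |T^K Z| <= |Z|/2 for large K.
   Conversely |T^n Z|^2 = <S_n Z, Z>, and iterating Cauchy-Schwarz with self-adjointness
   gives |T^n Z|^(2^(p+1)) |Z| <= |Z|^(2^(p+1)) |S_n^(2^p) Z|, so T^n contracts traceless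
   matrices once S_n is primitive. Either way the traceless part decays geometrically,
   which is primitivity. *)

Section Primitivity.
Variable R : realType.
Local Notation C := R[i].
Variable d : nat.
Local Notation M := 'M[C]_d.

Definition hsdot (A B : M) : C := \sum_i \sum_j A i j * (B i j)^*.

Local Notation hsnorm2 A := (hsdot A A).

Lemma mxtrace_adjmx_mul (A B : M) : \tr (adjmx A *m B) = hsdot B A.
Proof.
rewrite /mxtrace /hsdot exchange_big /=; apply: eq_bigr => j _.
by rewrite mxE; apply: eq_bigr => i _; rewrite !mxE mulrC.
Qed.

Lemma hsdot_linearl (B : M) : linear (hsdot ^~ B).
Proof.
move=> a A A'; rewrite /hsdot scaler_sumr -big_split; apply: eq_bigr => i _.
rewrite scaler_sumr -big_split; apply: eq_bigr => j _.
by rewrite !mxE mulrDl -mulrA.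
Qed.

Lemma hsdot_semilinearr (A : M) : GRing.linear_for (Num.conj \; *%R) (hsdot A).
Proof.
move=> a B B'; rewrite /hsdot /= mulr_sumr -big_split; apply: eq_bigr => i _.
rewrite mulr_sumr -big_split; apply: eq_bigr => j _.
by rewrite !mxE rmorphD rmorphM /= mulrDr mulrCA.
Qed.

HB.instance Definition _ :=
  bilinear_isBilinear.Build C M M C *%R (Num.conj \; *%R) hsdot
    (hsdot_linearl, hsdot_semilinearr).

Lemma hsdotC (A B : M) : hsdot A B = (hsdot B A)^*.
Proof.
rewrite /hsdot rmorph_sum; apply: eq_bigr => i _.
by rewrite rmorph_sum; apply: eq_bigr => j _; rewrite rmorphM /= conjCK mulrC.
Qed.

HB.instance Definition _ := isHermitianSesquilinear.Build C M false Num.conj hsdot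
  (fun A B => etrans (hsdotC A B) (esym (mul1r _))).

Lemma hsnorm2E (A : M) : hsnorm2 A = \sum_i \sum_j `|A i j| ^+ 2.
Proof. by apply: eq_bigr => i _; apply: eq_bigr => j _; rewrite normCK. Qed.

Lemma hsnorm2_ge0 (A : M) : 0 <= hsnorm2 A.
Proof. by rewrite hsnorm2E; do 2!apply: sumr_ge0 => ? _; apply: exprn_ge0. Qed.

Lemma hsnorm2_entry (A : M) i j : `|A i j| ^+ 2 <= hsnorm2 A.
Proof.
rewrite hsnorm2E (bigD1 i) //= (bigD1 j) //= -addrA lerDl.
by apply: addr_ge0; do ?apply: sumr_ge0 => ? _; apply: exprn_ge0.
Qed.

Lemma hsnorm2_eq0 (A : M) : hsnorm2 A = 0 -> A = 0.
Proof.
move=> A0; apply/matrixP => i j; rewrite mxE; apply/eqP.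
rewrite -normr_eq0 -sqrf_eq0 eq_le exprn_ge0 ?andbT //.
by rewrite -A0 hsnorm2_entry.
Qed.

Lemma hsnorm2_gt0 (A : M) : A != 0 -> 0 < hsnorm2 A.
Proof.
move=> nzA; rewrite lt_def hsnorm2_ge0 andbT.
by apply: contraNneq nzA => /hsnorm2_eq0 ->.
Qed.

HB.instance Definition _ := isDotProduct.Build C M hsdot hsnorm2_gt0.

Lemma hsdot_CauchySchwarz (A B : M) : `|hsdot A B| ^+ 2 <= hsnorm2 A * hsnorm2 B.
Proof. exact: (CauchySchwarz (hsdot : {dot M for Num.conj}) A B). Qed.

Section LinearMaps.
Variable f : M -> M.
Hypothesis f_linear : linear f.

Lemma lmap0 : f 0 = 0.
Proof. by have := f_linear (-1) 0 0; rewrite scaler0 addr0 scaleN1r addNr. Qed.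

Lemma lmapD X Y : f (X + Y) = f X + f Y.
Proof. by have := f_linear 1 X Y; rewrite !scale1r. Qed.

Lemma lmapZ a X : f (a *: X) = a *: f X.
Proof. by have := f_linear a X 0; rewrite !addr0 lmap0 addr0. Qed.

Lemma lmapB X Y : f (X - Y) = f X - f Y.
Proof. by rewrite -scaleN1r lmapD lmapZ scaleN1r. Qed.

Lemma lmap_sum (I : finType) (F : I -> M) : f (\sum_i F i) = \sum_i f (F i).
Proof. by elim/big_rec2: _ => [|i x y _ <-]; rewrite ?lmap0 ?lmapD. Qed.

Lemma lmap_iter k : linear (iter k f).
Proof. by elim: k => [//|k IH] a X Y /=; rewrite IH f_linear. Qed.

Lemma hsdot_hs_adjoint A B : hsdot (hs_adjoint f B) A = hsdot B (f A).
Proof.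
rewrite {2}(matrix_sum_delta A) lmap_sum linear_sumr; apply: eq_bigr => i _.
rewrite lmap_sum linear_sumr; apply: eq_bigr => j _.
by rewrite lmapZ linearZr !mxE mxtrace_adjmx_mul mulrC.
Qed.

End LinearMaps.

Lemma lmap_comp (f g : M -> M) : linear f -> linear g -> linear (fun X => f (g X)).
Proof. by move=> hf hg a X Y; rewrite hg hf. Qed.

Lemma linear_hs_adjoint (f : M -> M) : linear (hs_adjoint f).
Proof.
by move=> a X Y; apply/matrixP => i j; rewrite !mxE !mxtrace_adjmx_mul linearPl.
Qed.

Lemma hsdot_iter_hs_adjoint (f : M -> M) k A B : linear f ->
  hsdot (iter k (hs_adjoint f) B) A = hsdot B (iter k f A).
Proof.
move=> hf; elim: k A => [//|k IH] A.
by rewrite iterS hsdot_hs_adjoint ?IH -?iterSr //; apply/lmap_iter/linear_hs_adjoint.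
Qed.

Lemma adjmxM m n p (A : 'M[C]_(m, n)) (B : 'M[C]_(n, p)) :
  adjmx (A *m B) = adjmx B *m adjmx A.
Proof. by rewrite /adjmx map_mxM trmx_mul. Qed.

Lemma adjmxD m n (A B : 'M[C]_(m, n)) : adjmx (A + B) = adjmx A + adjmx B.
Proof. by rewrite /adjmx map_mxD linearD. Qed.

Lemma adjmxN m n (A : 'M[C]_(m, n)) : adjmx (- A) = - adjmx A.
Proof. by rewrite /adjmx map_mxN linearN. Qed.

Lemma adjmxK m n (A : 'M[C]_(m, n)) : adjmx (adjmx A) = A.
Proof. by apply/matrixP => i j; rewrite !mxE conjCK. Qed.

Lemma adjmx1 : adjmx (1%:M : M) = 1%:M.
Proof. by rewrite /adjmx map_mx1 trmx1. Qed.

Lemma adjmx_mul_diag_ge0 m n (A : 'M[C]_(m, n)) i : 0 <= (adjmx A *m A) i i.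
Proof.
rewrite mxE; apply: sumr_ge0 => k _.
by rewrite !mxE mulrC -normCK exprn_ge0.
Qed.

Definition qform (X : M) (u v : 'cV[C]_d) : C := (adjmx u *m X *m v) 0 0.

Lemma qformDl X u1 u2 v : qform X (u1 + u2) v = qform X u1 v + qform X u2 v.
Proof. by rewrite /qform adjmxD !mulmxDl mxE. Qed.

Lemma qformDr X u v1 v2 : qform X u (v1 + v2) = qform X u v1 + qform X u v2.
Proof. by rewrite /qform mulmxDr mxE. Qed.

Lemma qform_delta X a b p q :
  qform X (a *: delta_mx p 0) (b *: delta_mx q 0) = a^* * b * X p q.
Proof.
rewrite /qform !mxE.
under eq_bigr => l _ do rewrite !mxE.
under eq_bigr => l _ do under eq_bigr => k _ do
  rewrite !mxE eqxx andbT rmorphM /= conjC_nat.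
rewrite (bigD1 q) //= [X in _ + X]big1 => [|l /negbTE->]; last by rewrite !mulr0.
rewrite addr0 !eqxx mulr1 (bigD1 p) //= [X in _ + X]big1 => [|k /negbTE->];
  last by rewrite mulr0 mul0r.
by rewrite addr0 eqxx mulr1 mulrAC.
Qed.

Lemma qform_delta1 X p q : qform X (delta_mx p 0) (delta_mx q 0) = X p q.
Proof. by have := qform_delta X 1 1 p q; rewrite !scale1r conjC1 !mul1r. Qed.

Definition block2 (P Q Q' U : M) : 'I_2 -> 'I_2 -> M := fun i j =>
  if i == 0 :> nat then (if j == 0 :> nat then P else Q)
  else (if j == 0 :> nat then Q' else U).

Section Block2.
Variables P Q Q' U : M.
Hypothesis psdPQU : psd_block (block2 P Q Q' U).

Lemma psd_block2_ge0 u v :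
  0 <= qform P u u + qform Q u v + qform Q' v u + qform U v v.
Proof.
have := psdPQU (fun i : 'I_2 => if i == 0 :> nat then u else v).
by rewrite !big_ord_recl !big_ord0 /= !addr0 addrA.
Qed.

Lemma psd_block2_adjmx : Q' = adjmx Q.
Proof.
(* F l - F (- l) = 2 (l^* Q j i + l Q' i j) is real for every l; l = 1 and l = 'i
   give the real and imaginary parts of Q' i j = (Q j i)^*. *)
apply/matrixP => i j.
pose F (l : C) := qform P (l *: delta_mx j 0) (l *: delta_mx j 0)
  + qform Q (l *: delta_mx j 0) (1 *: delta_mx i 0)
  + qform Q' (1 *: delta_mx i 0) (l *: delta_mx j 0)
  + qform U (1 *: delta_mx i 0) (1 *: delta_mx i 0).
have F_real l : (F l)^* = F l by apply/CrealP/ger0_real/psd_block2_ge0.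
have FN l : F l - F (- l) = 2%:R * (l^* * Q j i + l * Q' i j).
  by rewrite /F !qform_delta !rmorphN /= rmorph1 !mulr1 !mul1r mulrNN; ring.
have two_neq0 : (2%:R : C) != 0 by rewrite pnatr_eq0.
have real_half (z : C) : (2%:R * z)^* = 2%:R * z -> z^* = z.
  by rewrite rmorphM /= conjC_nat => /(mulfI two_neq0).
have real_sum : (Q j i + Q' i j)^* = Q j i + Q' i j.
  apply: real_half; have := FN 1; rewrite rmorph1 !mul1r => <-.
  by rewrite rmorphB /= !F_real.
have real_diff : ('i * (Q' i j - Q j i))^* = 'i * (Q' i j - Q j i).
  apply: real_half.
  have -> : 2%:R * ('i * (Q' i j - Q j i)) = F 'i - F (- 'i).
    by rewrite FN conjCi; ring.
  by rewrite rmorphB /= !F_real.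
rewrite !mxE; apply: (mulfI two_neq0).
move: real_sum real_diff; rewrite rmorphM rmorphB !rmorphD /= conjCi => Es Ed.
have Ed' : (Q' i j)^* - (Q j i)^* = Q j i - Q' i j.
  apply: (@mulfI _ (- 'i)); first by rewrite oppr_eq0 neq0Ci.
  by rewrite Ed mulNr -mulrN opprB.
have -> : 2%:R * Q' i j = (Q j i + Q' i j) - (Q j i - Q' i j) by ring.
by rewrite -Es -Ed'; ring.
Qed.

End Block2.

Lemma psd_block2_schwarz (X : M) : psd_block (block2 1%:M X (adjmx X) (adjmx X *m X)).
Proof.
move=> v; rewrite !big_ord_recl !big_ord0 /= !addr0 /block2 /= mulmx1.
set w := v ord0 + X *m v (lift ord0 ord0).
have : 0 <= qform 1%:M w w by rewrite /qform mulmx1 adjmx_mul_diag_ge0.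
by rewrite qformDl !qformDr /qform !mulmx1 adjmxM !mulmxA !addrA.
Qed.

Lemma hsnorm2_unital_channel_le (T : M -> M) X :
  completely_positive T -> trace_preserving T -> T 1%:M = 1%:M ->
  hsnorm2 (T X) <= hsnorm2 X.
Proof.
move=> cpT tpT T1.
have psdT : psd_block (block2 1%:M (T X) (T (adjmx X)) (T (adjmx X *m X))).
  move=> v; have := cpT 2 _ (psd_block2_schwarz X) v; congr (0 <= _).
  apply: eq_bigr => i _; apply: eq_bigr => j _.
  by rewrite /block2; do 2 case: ifP => _ //; rewrite T1.
have TX_adj := psd_block2_adjmx psdT; rewrite TX_adj in psdT.
have Kadison_Schwarz_diag j : (adjmx (T X) *m T X) j j <= T (adjmx X *m X) j j.
  pose e : 'cV[C]_d := delta_mx j 0.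
  have := psd_block2_ge0 psdT (- (T X *m e)) e.
  have qdelta (W : M) : (adjmx e *m (W *m e)) 0 0 = W j j.
    by rewrite mulmxA; apply: qform_delta1.
  rewrite /qform adjmxN adjmxM mulmx1 !mulNmx !mulmxN opprK !mulmxA.
  have mxN00 (Y : 'M[C]_1) : (- Y) 0 0 = - Y 0 0 by rewrite mxE.
  rewrite !mxN00 -!(mulmxA (adjmx e)) !qdelta.
  by rewrite subrr sub0r addrC subr_ge0.
rewrite -!mxtrace_adjmx_mul -(tpT (adjmx X *m X)).
by apply: ler_sum => j _; apply: Kadison_Schwarz_diag.
Qed.

Lemma hsnorm2_hs_adjoint_le (f : M -> M) A : linear f ->
  (forall X, hsnorm2 (f X) <= hsnorm2 X) -> hsnorm2 (hs_adjoint f A) <= hsnorm2 A.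
Proof.
move=> f_linear f_contr; set Y := hs_adjoint f A.
have NY : hsnorm2 Y = hsdot A (f Y) by rewrite {1}/Y hsdot_hs_adjoint.
have : hsnorm2 Y * hsnorm2 Y <= hsnorm2 A * hsnorm2 Y.
  have := hsdot_CauchySchwarz A (f Y); rewrite -NY ger0_norm ?hsnorm2_ge0 // expr2.
  by move/le_trans; apply; rewrite ler_wpM2l ?hsnorm2_ge0.
have [->|nzY] := eqVneq (hsnorm2 Y) 0; first by rewrite hsnorm2_ge0.
by rewrite ler_pM2r // lt_def nzY hsnorm2_ge0.
Qed.

Lemma hsnorm2_iter_le (f : M -> M) k X :
  (forall X, hsnorm2 (f X) <= hsnorm2 X) -> hsnorm2 (iter k f X) <= hsnorm2 X.
Proof. by move=> f_contr; elim: k => //= k IH; apply: le_trans (f_contr _) IH. Qed.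

Lemma mxtrace_hsdot1 (Y : M) : \tr Y = hsdot Y 1%:M.
Proof. by rewrite -mxtrace_adjmx_mul adjmx1 mul1mx. Qed.

Lemma trace_preserving_hs_adjoint (f : M -> M) :
  linear f -> f 1%:M = 1%:M -> trace_preserving (hs_adjoint f).
Proof. by move=> f_linear f1 A; rewrite !mxtrace_hsdot1 hsdot_hs_adjoint ?f1. Qed.

Lemma trace_preserving_iter (f : M -> M) k :
  trace_preserving f -> trace_preserving (iter k f).
Proof. by move=> tpf; elim: k => //= k IH A; rewrite tpf IH. Qed.

Definition maxmix : M := d%:R^-1 *: 1%:M.

Lemma lmap_maxmix (f : M -> M) : linear f -> f 1%:M = 1%:M -> f maxmix = maxmix.
Proof. by move=> f_linear f1; rewrite /maxmix lmapZ // f1. Qed.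

Definition eventually (P : nat -> Prop) := exists N, forall k, (N <= k)%N -> P k.

Lemma eventually_forall (I : finType) (P : I -> nat -> Prop) :
  (forall i, eventually (P i)) -> eventually (fun k => forall i, P i k).
Proof.
move=> /fin_all_exists[N hN]; exists (\max_i N i) => k Nk i.
by apply: hN; apply: leq_trans Nk; apply: leq_bigmax.
Qed.

Lemma mx_cvgD (u v : nat -> M) L L' : mx_cvg u L -> mx_cvg v L' ->
  mx_cvg (fun k => u k + v k) (L + L').
Proof.
move=> cvg_u cvg_v e e_gt0.
have [N1 h1] := cvg_u _ (divr_gt0 e_gt0 (ltr0n _ 2)).
have [N2 h2] := cvg_v _ (divr_gt0 e_gt0 (ltr0n _ 2)).
exists (maxn N1 N2) => k; rewrite geq_max => /andP[k1 k2] i j.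
rewrite !mxE opprD addrACA; apply: le_lt_trans (ler_normD _ _) _.
by rewrite (splitr e) ltrD ?h1 ?h2.
Qed.

Lemma mx_cvgZ (u : nat -> M) L a : mx_cvg u L -> mx_cvg (fun k => a *: u k) (a *: L).
Proof.
move=> cvg_u e e_gt0; have [->|a_neq0] := eqVneq a 0.
  by exists 0%N => k _ i j; rewrite !scale0r !mxE subrr normr0.
have a_gt0 : 0 < `|a| by rewrite normr_gt0.
have [N h] := cvg_u _ (divr_gt0 e_gt0 a_gt0).
by exists N => k Nk i j; rewrite !mxE -mulrBr normrM mulrC -ltr_pdivlMr ?h.
Qed.

Lemma eq_mx_cvg (u v : nat -> M) L : u =1 v -> mx_cvg u L -> mx_cvg v L.
Proof. by move=> uv cvg_u e /cvg_u[N h]; exists N => k Nk i j; rewrite -uv h. Qed.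

Lemma density_dim_gt0 (rho : M) : density rho -> (0 < d)%N.
Proof.
by case: d rho => // rho [_]; rewrite /mxtrace big_ord0 => /eqP; rewrite eq_sym oner_eq0.
Qed.

Lemma psdZ (A : M) c : 0 <= c -> psd A -> psd (c *: A).
Proof. by move=> c_ge0 psdA v; rewrite -scalemxAr -scalemxAl mxE mulr_ge0. Qed.

Lemma density_maxmix : (0 < d)%N -> density maxmix.
Proof.
move=> d_gt0; split; last by rewrite mxtraceZ mxtrace1 mulVf // pnatr_eq0 -lt0n.
apply: psdZ; first by rewrite invr_ge0 ler0n.
by move=> v; rewrite mulmx1 adjmx_mul_diag_ge0.
Qed.

Definition rank1 (w : 'cV[C]_d) : M := w *m adjmx w.

Lemma rank1E (w : 'cV[C]_d) i j : rank1 w i j = w i 0 * (w j 0)^*.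
Proof. by rewrite mxE big_ord1 !mxE. Qed.

Lemma psd_rank1 (w : 'cV[C]_d) : psd (rank1 w).
Proof.
move=> v; rewrite /rank1 !mulmxA -(mulmxA (adjmx v *m w)).
rewrite -[adjmx v *m w]adjmxK adjmxM adjmxK.
exact: adjmx_mul_diag_ge0.
Qed.

Lemma density_rank1 (w : 'cV[C]_d) t :
  qform 1%:M w w = t -> t != 0 -> density (t^-1 *: rank1 w).
Proof.
move=> wwt t_neq0; have tE : t = (adjmx w *m w) 0 0 by rewrite -wwt /qform mulmx1.
split; first by apply: psdZ (psd_rank1 w); rewrite invr_ge0 tE adjmx_mul_diag_ge0.
by rewrite mxtraceZ /rank1 mxtrace_mulC /mxtrace big_ord1 -tE mulVf.
Qed.

Lemma density_delta b : density (delta_mx b b : M).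
Proof.
have -> : delta_mx b b = 1^-1 *: rank1 (delta_mx b 0).
  by apply/matrixP => i j; rewrite invr1 scale1r rank1E !mxE !andbT conjC_nat -natrM mulnb.
apply: density_rank1 (oner_neq0 _).
by rewrite qform_delta1 mxE eqxx.
Qed.

Lemma delta_mx_polarization a b :
  delta_mx a b = (2%:R^-1 *: rank1 (delta_mx a 0 + delta_mx b 0) - maxmix)
    + 'i *: (2%:R^-1 *: rank1 (delta_mx a 0 + 'i *: delta_mx b 0) - maxmix)
    - ((1 + 'i) / 2%:R) *: ((delta_mx a a - maxmix) + (delta_mx b b - maxmix)).
Proof.
apply/matrixP => x y.
have r1 : rank1 (delta_mx a 0 + delta_mx b 0) x y =
    ((x == a)%:R + (x == b)%:R) * ((y == a)%:R + (y == b)%:R)^*.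
  by rewrite rank1E !mxE !andbT.
have ri : rank1 (delta_mx a 0 + 'i *: delta_mx b 0) x y =
    ((x == a)%:R + 'i * (x == b)%:R) * ((y == a)%:R + 'i * (y == b)%:R)^*.
  by rewrite rank1E !mxE !andbT.
have mE : maxmix x y = d%:R^-1 * (x == y)%:R by rewrite !mxE.
move: (rank1 _) (rank1 _) maxmix r1 ri mE => P1 Pi S r1 ri mE.
rewrite !mxE r1 ri mE -!mulnb !natrM !rmorphD !rmorphM /= !conjC_nat conjCi.
move: ('i : C) (sqrCi C) => j j2.
set A1 : C := (x == a)%:R; set B1 : C := (x == b)%:R.
set A2 : C := (y == a)%:R; set B2 : C := (y == b)%:R.
apply/eqP; rewrite eq_sym -subr_eq0; apply/eqP.
transitivity ((j ^+ 2 + 1) * ((B1 * A2 - A1 * B2 - j * B1 * B2) / 2%:R)).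
  by set s := _ * (x == y)%:R; field.
by rewrite j2 addNr mul0r.
Qed.

Lemma qform_delta_pair a b c : a != b -> c^* * c = 1 ->
  qform 1%:M (delta_mx a 0 + c *: delta_mx b 0) (delta_mx a 0 + c *: delta_mx b 0)
    = 2%:R.
Proof.
move=> nab cc1; rewrite -[delta_mx a 0 : 'cV[C]_d]scale1r !qformDl !qformDr.
rewrite !qform_delta !mxE eqxx (negbTE nab) eq_sym (negbTE nab) conjC1.
by rewrite !mulr1 !mulr0 addr0 add0r cc1 eqxx mulr1 -mulr2n.
Qed.

Lemma sumr_const_sqr (x : C) : \sum_(i < d) \sum_(j < d) x = d%:R ^+ 2 * x.
Proof. by rewrite !sumr_const card_ord -mulrnA mulnn -natrX mulr_natl. Qed.

Lemma hsnorm2_le_entries (Y : M) c :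
  (forall i j, `|Y i j| <= c) -> hsnorm2 Y <= d%:R ^+ 2 * c ^+ 2.
Proof.
move=> Yc; rewrite hsnorm2E.
apply: le_trans (_ : \sum_(i < d) \sum_(j < d) c ^+ 2 <= _).
  by do 2!apply: ler_sum => ? _; rewrite !expr2 ler_pM.
by rewrite sumr_const_sqr.
Qed.

Lemma sum_norm_entries_sqr_le (Z : M) :
  (\sum_a \sum_b `|Z a b|) ^+ 2 <= d%:R ^+ 2 * hsnorm2 Z.
Proof.
have := hsdot_CauchySchwarz (\matrix_(a, b) `|Z a b|) (const_mx 1).
have -> : hsdot (\matrix_(a, b) `|Z a b|) (const_mx 1) = \sum_a \sum_b `|Z a b|.
  by do 2!apply: eq_bigr => ? _; rewrite !mxE conjC1 mulr1.
have -> : hsnorm2 (\matrix_(a, b) `|Z a b|) = hsnorm2 Z.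
  by rewrite !hsnorm2E; do 2!apply: eq_bigr => ? _; rewrite mxE normr_id.
have -> : hsnorm2 (const_mx 1 : M) = d%:R ^+ 2.
  rewrite -[RHS]mulr1 -sumr_const_sqr.
  by do 2!apply: eq_bigr => ? _; rewrite !mxE conjC1 mulr1.
rewrite ger0_norm; last by do 2!apply: sumr_ge0 => ? _.
by rewrite mulrC.
Qed.

Definition trless_delta a b : M := delta_mx a b - (a == b)%:R *: maxmix.

Lemma traceless_sum_delta (Z : M) :
  \tr Z = 0 -> Z = \sum_a \sum_b Z a b *: trless_delta a b.
Proof.
move=> trZ.
have diag_part : \sum_a \sum_b Z a b *: ((a == b)%:R *: maxmix) = 0.
  transitivity (\tr Z *: maxmix); last by rewrite trZ scale0r.
  rewrite /mxtrace scaler_suml; apply: eq_bigr => a _.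
  rewrite (bigD1 a) //= eqxx scale1r big1 ?addr0 // => b /negbTE nba.
  by rewrite eq_sym nba scale0r scaler0.
under eq_bigr => a _ do under eq_bigr => b _ do rewrite /trless_delta scalerBr.
under eq_bigr => a _ do rewrite sumrB.
by rewrite sumrB diag_part subr0 -matrix_sum_delta.
Qed.

Section PrimitiveSequence.
Variable f : nat -> M -> M.
Hypothesis f_linear : forall k, linear (f k).
Hypothesis f_primitive :
  forall rho, density rho -> mx_cvg (fun k => f k rho) maxmix.

Definition vanishes (Z : M) := mx_cvg (fun k => f k Z) 0.

Lemma vanishesD Z1 Z2 : vanishes Z1 -> vanishes Z2 -> vanishes (Z1 + Z2).
Proof.
move=> v1 v2; have := mx_cvgD v1 v2; rewrite addr0.
by apply: eq_mx_cvg => k; rewrite lmapD.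
Qed.

Lemma vanishesZ a Z : vanishes Z -> vanishes (a *: Z).
Proof.
move=> vZ; have := mx_cvgZ a vZ; rewrite scaler0.
by apply: eq_mx_cvg => k; rewrite lmapZ.
Qed.

Lemma vanishesB Z1 Z2 : vanishes Z1 -> vanishes Z2 -> vanishes (Z1 - Z2).
Proof. by move=> v1 v2; rewrite -scaleN1r; apply/vanishesD/vanishesZ. Qed.

Lemma vanishes_density_sub rho1 rho2 :
  density rho1 -> density rho2 -> vanishes (rho1 - rho2).
Proof.
move=> d1 d2; have := mx_cvgD (f_primitive d1) (mx_cvgZ (-1) (f_primitive d2)).
by rewrite scaleN1r subrr; apply: eq_mx_cvg => k; rewrite scaleN1r lmapB.
Qed.

Lemma vanishes_trless_delta a b : vanishes (trless_delta a b).
Proof.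
have d_gt0 : (0 < d)%N := leq_ltn_trans (leq0n a) (ltn_ord a).
have vanishes_density rho : density rho -> vanishes (rho - maxmix).
  by move=> drho; apply: vanishes_density_sub drho (density_maxmix d_gt0).
rewrite /trless_delta; have [<-|nab] := eqVneq a b.
  by rewrite scale1r; apply/vanishes_density/density_delta.
have two_neq0 : (2%:R : C) != 0 by rewrite pnatr_eq0.
have pair1 :
    qform 1%:M (delta_mx a 0 + delta_mx b 0) (delta_mx a 0 + delta_mx b 0) = 2%:R.
  by rewrite -[delta_mx b 0 : 'cV[C]_d]scale1r qform_delta_pair // conjC1 mulr1.
have conjCi_mul : 'i^* * 'i = 1 :> C by rewrite -normCKC normCi expr1n.
have pairi := qform_delta_pair nab conjCi_mul.
rewrite scale0r subr0 delta_mx_polarization.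
apply: vanishesB; first apply: vanishesD.
- exact: vanishes_density (density_rank1 pair1 two_neq0).
- exact/vanishesZ/vanishes_density/(density_rank1 pairi two_neq0).
- by apply/vanishesZ/vanishesD; apply/vanishes_density/density_delta.
Qed.

Lemma primitive_eventually_contracts : exists K, forall k, (K <= k)%N ->
  forall Z : M, \tr Z = 0 -> hsnorm2 (f k Z) <= 4%:R^-1 * hsnorm2 Z.
Proof.
have [d0|d_gt0] := posnP d.
  exists 0%N => k _ Z _.
  have -> : hsnorm2 (f k Z) = 0.
    rewrite /hsdot big1 // => i.
    by have := leq_trans (ltn_ord i) (eq_leq d0); rewrite ltn0.
  by rewrite mulr_ge0 ?invr_ge0 ?ler0n ?hsnorm2_ge0.
(* The entries of f k Z are at most eps * \sum |Z a b| by traceless_sum_delta, which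
   gives |f k Z|^2 <= d^4 eps^2 |Z|^2 = |Z|^2 / 4. *)
pose eps : C := (2%:R * d%:R ^+ 2)^-1.
have eps_gt0 : 0 < eps by rewrite invr_gt0 mulr_gt0 ?exprn_gt0 ?ltr0n.
have [K hK] :
    eventually (fun k => forall a b i j, `|f k (trless_delta a b) i j| < eps).
  apply: eventually_forall => a; apply: eventually_forall => b.
  have [N hN] := vanishes_trless_delta a b eps_gt0.
  by exists N => k Nk i j; have := hN k Nk i j; rewrite mxE subr0.
exists K => k Kk Z trZ; set S := \sum_a \sum_b `|Z a b|.
have entry_bound i j : `|f k Z i j| <= eps * S.
  rewrite (traceless_sum_delta trZ) lmap_sum // summxE.
  apply: le_trans (ler_norm_sum _ _ _) _; rewrite /S mulr_sumr; apply: ler_sum => a _.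
  rewrite lmap_sum // summxE; apply: le_trans (ler_norm_sum _ _ _) _.
  rewrite mulr_sumr; apply: ler_sum => b _.
  by rewrite lmapZ // mxE normrM mulrC ler_wpM2r // ltW ?hK.
apply: le_trans (hsnorm2_le_entries entry_bound) _.
rewrite exprMn mulrA; apply: le_trans (ler_wpM2l _ (sum_norm_entries_sqr_le Z)) _.
  by rewrite mulr_ge0 ?exprn_ge0 ?ler0n ?ltW.
have -> : d%:R ^+ 2 * eps ^+ 2 * (d%:R ^+ 2 * hsnorm2 Z) = 4%:R^-1 * hsnorm2 Z.
  by rewrite /eps; field; rewrite pnatr_eq0 -lt0n.
by [].
Qed.

End PrimitiveSequence.

Lemma exists_natr_gt (x : C) : 0 <= x -> exists n : nat, x < n%:R.
Proof.
move=> x_ge0; have x_real : x \is Num.real := ger0_real x_ge0.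
rewrite -(RRe_real x_real) ler0c in x_ge0 *.
exists (Num.Def.archi_bound (complex.Re x)).
by rewrite -(rmorph_nat (real_complex R)) ltcR archi_boundP.
Qed.

Lemma eventually_lt_geometric (x : nat -> C) (b : C) (c : nat -> nat) :
  (forall m n, (m <= n)%N -> x n <= x m) -> 0 <= b ->
  (forall j, x (c j) <= 4%:R^-1 ^+ j * b) ->
  forall e, 0 < e -> eventually (fun m => x m < e).
Proof.
move=> x_noninc b_ge0 x_geo e e_gt0.
have [j j_gt] := exists_natr_gt (divr_ge0 b_ge0 (ltW e_gt0)).
exists (c j) => m cj_m; apply: le_lt_trans (x_noninc _ _ cj_m) _.
apply: le_lt_trans (x_geo j) _.
rewrite exprVn mulrC ltr_pdivrMr ?exprn_gt0 ?ltr0n // mulrC -ltr_pdivrMr //.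
by apply: lt_le_trans j_gt _; rewrite -natrX ler_nat ltnW // ltn_expl.
Qed.

Lemma iter_cvg0_of_geometric (g : M -> M) (Z : M) (P : nat) (c : nat -> nat) :
  (0 < P)%N -> (forall X, hsnorm2 (g X) <= hsnorm2 X) ->
  (forall j, hsnorm2 (iter (c j) g Z) ^+ P <= 4%:R^-1 ^+ j * hsnorm2 Z ^+ P) ->
  mx_cvg (fun m => iter m g Z) 0.
Proof.
move=> P_gt0 g_contr geo e e_gt0.
have noninc m n : (m <= n)%N ->
    hsnorm2 (iter n g Z) ^+ P <= hsnorm2 (iter m g Z) ^+ P.
  move=> /subnK <-; rewrite iterD ler_pXn2r ?nnegrE ?hsnorm2_ge0 //.
  exact: hsnorm2_iter_le.
have [N hN] := eventually_lt_geometric noninc (exprn_ge0 P (hsnorm2_ge0 Z)) geo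
  (exprn_gt0 P (exprn_gt0 2 e_gt0)).
exists N => m Nm i j; rewrite mxE subr0.
rewrite -(@ltr_pXn2r _ (2 * P)%N) ?muln_gt0 ?nnegrE ?(ltW e_gt0) //.
rewrite !exprM; apply: le_lt_trans (hN m Nm).
by rewrite ler_pXn2r ?nnegrE ?exprn_ge0 ?hsnorm2_ge0 ?hsnorm2_entry.
Qed.

Lemma primitive_of_traceless_cvg0 (S : M -> M) :
  linear S -> S maxmix = maxmix ->
  (forall Z : M, \tr Z = 0 -> mx_cvg (fun k => iter k S Z) 0) -> primitive S.
Proof.
move=> S_linear S_maxmix S_cvg0 rho rho_density e e_gt0.
have d_gt0 := density_dim_gt0 rho_density.
have tr_diff : \tr (rho - maxmix) = 0.
  by rewrite linearB /= (proj2 rho_density) (proj2 (density_maxmix d_gt0)) subrr.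
have [N hN] := S_cvg0 _ tr_diff e e_gt0; exists N => k Nk i j.
have -> : iter k S rho = iter k S (rho - maxmix) + maxmix.
  by rewrite (lmapB (lmap_iter S_linear k)) (iter_fix _ S_maxmix) subrK.
by rewrite -/maxmix mxE addrK; have := hN k Nk i j; rewrite mxE subr0.
Qed.

Lemma pow2_chain (x z : C) (y : nat -> C) p :
  0 <= x -> 0 <= z -> (forall q, 0 <= y q) ->
  x ^+ 2 <= z * y 0%N -> (forall q, y q ^+ 2 <= z * y q.+1) ->
  x ^+ (2 ^ p.+1) * z <= z ^+ (2 ^ p.+1) * y p.
Proof.
move=> x_ge0 z_ge0 y_ge0 x_le y_le; elim: p => [|p IH].
  by rewrite expn1; apply: le_trans (ler_wpM2r z_ge0 x_le) _; rewrite mulrAC -expr2.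
have [->|z_neq0] := eqVneq z 0; first by rewrite mulr0 mulr_ge0 ?exprn_ge0.
have z_gt0 : 0 < z by rewrite lt_def z_neq0.
rewrite -(ler_pM2r z_gt0) -mulrA -expr2.
have := lerXn2r 2 _ _ IH; rewrite !nnegrE !mulr_ge0 ?exprn_ge0 // => /(_ isT isT).
rewrite !exprMn -!exprM -!expnSr => /le_trans; apply.
by rewrite -mulrA ler_wpM2l ?exprn_ge0 // mulrC y_le.
Qed.

Lemma hsdot_iter_selfadj (S : M -> M) :
  (forall A B, hsdot (S A) B = hsdot A (S B)) ->
  forall k A B, hsdot (iter k S A) B = hsdot A (iter k S B).
Proof.
by move=> S_selfadj; elim=> [//|k IH] A B; rewrite iterS S_selfadj IH -iterSr.
Qed.

Section TstarT.
Variable T : M -> M.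
Hypothesis T_linear : linear T.

Definition TstarT n X := iter n (hs_adjoint T) (iter n T X).

Lemma linear_TstarT n : linear (TstarT n).
Proof. by apply: lmap_comp; apply: lmap_iter => //; apply: linear_hs_adjoint. Qed.

Lemma hsdot_TstarT n A B : hsdot (TstarT n A) B = hsdot A (TstarT n B).
Proof.
by rewrite /TstarT hsdot_iter_hs_adjoint // [RHS]hsdotC hsdot_iter_hs_adjoint // -hsdotC.
Qed.

Lemma hsnorm2_iter_TstarT n Z p :
  hsnorm2 (iter n T Z) ^+ (2 ^ p.+1) * hsnorm2 Z
    <= hsnorm2 Z ^+ (2 ^ p.+1) * hsnorm2 (iter (2 ^ p) (TstarT n) Z).
Proof.
apply: (pow2_chain (y := fun q => hsnorm2 (iter (2 ^ q) (TstarT n) Z)))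
  => [||q||q]; rewrite ?hsnorm2_ge0 //.
- have := hsdot_CauchySchwarz (TstarT n Z) Z.
  rewrite /TstarT hsdot_iter_hs_adjoint // ger0_norm ?hsnorm2_ge0 //.
  by rewrite mulrC; apply.
- have E : hsdot Z (iter (2 ^ q.+1) (TstarT n) Z)
           = hsnorm2 (iter (2 ^ q) (TstarT n) Z).
    by rewrite expnS mul2n -addnn iterD -(hsdot_iter_selfadj (hsdot_TstarT n)).
  have := hsdot_CauchySchwarz Z (iter (2 ^ q.+1) (TstarT n) Z).
  by rewrite E ger0_norm ?hsnorm2_ge0.
Qed.

End TstarT.

Lemma hsnorm2_iter_geometric (h : M -> M) P :
  trace_preserving h ->
  (forall Z : M, \tr Z = 0 -> hsnorm2 (h Z) ^+ P <= 4%:R^-1 * hsnorm2 Z ^+ P) ->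
  forall j (Z : M), \tr Z = 0 ->
    hsnorm2 (iter j h Z) ^+ P <= 4%:R^-1 ^+ j * hsnorm2 Z ^+ P.
Proof.
move=> tp_h h_contr; elim=> [|j IH] Z trZ; first by rewrite mul1r.
rewrite iterSr exprSr -mulrA; apply: le_trans (IH _ _) _; first by rewrite tp_h.
by rewrite ler_wpM2l ?exprn_ge0 ?invr_ge0 ?ler0n ?h_contr.
Qed.

Section DoublyStochastic.
Variable T : {linear M -> M}.
Hypothesis T_ds : doubly_stochastic T.

Let T_linear : linear T := linearP T.

Lemma hsnorm2_T_le X : hsnorm2 (T X) <= hsnorm2 X.
Proof. by case: T_ds => -[cpT tpT] [T1 _]; apply: hsnorm2_unital_channel_le. Qed.

Lemma hsnorm2_TstarT_le n X : hsnorm2 (TstarT T n X) <= hsnorm2 X.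
Proof.
apply: le_trans (hsnorm2_iter_le _ _ _) (hsnorm2_iter_le _ _ hsnorm2_T_le).
by move=> A; apply: hsnorm2_hs_adjoint_le hsnorm2_T_le.
Qed.

Lemma T_maxmix : T maxmix = maxmix.
Proof. by case: T_ds => _ [T1 _]; apply: lmap_maxmix. Qed.

Lemma TstarT_maxmix n : TstarT T n maxmix = maxmix.
Proof.
case: T_ds => _ [_ Tstar1].
by rewrite /TstarT !iter_fix ?T_maxmix ?lmap_maxmix //; apply: linear_hs_adjoint.
Qed.

Lemma trace_preserving_T : trace_preserving T.
Proof. by case: T_ds => -[]. Qed.

Lemma trace_preserving_TstarT n : trace_preserving (TstarT T n).
Proof.
case: T_ds => _ [T1 _] X; rewrite /TstarT !trace_preserving_iter //.
  exact: trace_preserving_T.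
exact: trace_preserving_hs_adjoint.
Qed.

Lemma primitive_TstarT : primitive T -> exists n, primitive (TstarT T n).
Proof.
move=> T_primitive.
have [K hK] := primitive_eventually_contracts (lmap_iter T_linear) T_primitive.
exists K; apply: primitive_of_traceless_cvg0 (linear_TstarT T_linear K) _ _ => [|Z trZ].
  exact: TstarT_maxmix.
apply: (iter_cvg0_of_geometric (P := 1) (c := id)) => // [X|j].
  exact: hsnorm2_TstarT_le.
apply: hsnorm2_iter_geometric (trace_preserving_TstarT K) _ j Z trZ => Y trY.
rewrite !expr1; apply: le_trans (hK K (leqnn K) Y trY).
by apply: hsnorm2_iter_le => A; apply: hsnorm2_hs_adjoint_le hsnorm2_T_le.
Qed.

Lemma primitive_of_TstarT : (exists n, primitive (TstarT T n)) -> primitive T.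
Proof.
move=> [n TstarT_primitive].
have [K hK] := primitive_eventually_contracts (lmap_iter (linear_TstarT T_linear n))
  TstarT_primitive.
pose P := (2 ^ K.+1)%N.
have Tn_contracts Z : \tr Z = 0 ->
    hsnorm2 (iter n T Z) ^+ P <= 4%:R^-1 * hsnorm2 Z ^+ P.
  move=> trZ; have [Z0|Z_neq0] := eqVneq (hsnorm2 Z) 0.
    have TZ0 : hsnorm2 (iter n T Z) = 0.
      apply/eqP; rewrite eq_le hsnorm2_ge0 -Z0 andbT.
      exact/hsnorm2_iter_le/hsnorm2_T_le.
    by rewrite TZ0 Z0 expr0n expn_eq0 /= mulr0.
  have Z_gt0 : 0 < hsnorm2 Z by rewrite lt_def Z_neq0 hsnorm2_ge0.
  rewrite -(ler_pM2r Z_gt0); apply: le_trans (hsnorm2_iter_TstarT T_linear n Z K) _.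
  have K_le : (K <= 2 ^ K)%N by rewrite ltnW // ltn_expl.
  rewrite [4%:R^-1 * _]mulrC -mulrA.
  by apply: ler_wpM2l (hK _ K_le Z trZ); rewrite exprn_ge0 ?hsnorm2_ge0.
apply: primitive_of_traceless_cvg0 T_linear T_maxmix _ => Z trZ.
apply: (iter_cvg0_of_geometric (P := P) (c := fun j => j * n)%N) => [||j].
- by rewrite expn_gt0.
- exact: hsnorm2_T_le.
- rewrite iterM; apply: hsnorm2_iter_geometric trZ => //.
  exact/trace_preserving_iter/trace_preserving_T.
Qed.

End DoublyStochastic.
End Primitivity.

Theorem mainTheorem11 (R : realType) (d : nat)
    (T : {linear 'M[R[i]]_d -> 'M[R[i]]_d}) :
  doubly_stochastic T ->
  (primitive T <->
   exists n : nat,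
     primitive (fun X => iter n (hs_adjoint T) (iter n T X))).
Proof.
by move=> T_ds; split; [apply: primitive_TstarT | apply: primitive_of_TstarT].
Qed.
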